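(* Every finite abelian group is completely $\Phi$-realisable.
   Context: All groups are finite. $\Phi(H)$ denotes the Frattini subgroup of $H$. A finite group $G$ is completely $\Phi$-realisable if there is a finite group $H$ such that: (i) $G\cong \Phi(H)$; (ii) for every subgroup $G_1\leq G$ there exists $H_1\leq H$ with $G_1\cong \Phi(H_1)$; (iii) for every $H_1\leq H$ there exists $G_1\leq G$ with $\Phi(H_1)\cong G_1$. *)

From mathcomp Require Import all_boot all_fingroup all_solvable.
Set Implicit Arguments. Unset Strict Implicit. Unset Printing Implicit Defensive.
Local Open Scope group_scope.

Definition completely_Phi_realisable (gT : finGroupType) (G : {group gT}) : Prop :=
  exists (hT : finGroupType) (H : {group hT}),
    [/\ G \isog 'Phi(H),
        (forall G1 : {group gT}, G1 \subset G ->
           exists2 H1 : {group hT}, H1 \subset H & G1 \isog 'Phi(H1))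
      & (forall H1 : {group hT}, H1 \subset H ->
           exists2 G1 : {group gT}, G1 \subset G & 'Phi(H1) \isog G1)].

(* Let r be the product of the primes dividing |G|.  If H is abelian and
   every prime divisor of |H| divides the squarefree number r, then
   Phi(H) = H^r: each maximal subgroup of H has prime index dividing r, so
   contains H^r, while H/H^r is abelian of squarefree exponent and hence has
   trivial Frattini subgroup.  This applies to every subgroup of H as well.
   Writing G as a direct product of cyclic groups of orders n_i, take H the
   product of cyclic groups of orders n_i r, so that H^r is isomorphic to G.
   Through the r-th power morphism of H, each Phi(H1) = H1^r with H1 <= H is
   a subgroup of H^r, and each subgroup K of H^r is Phi of its preimage. *)

From mathcomp Require Import all_boot all_fingroup all_solvable.
From mathcomp Require Import zmodp.
Set Implicit Arguments. Unset Strict Implicit. Unset Printing Implicit Defensive.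
Local Open Scope group_scope.

Definition squarefree (n : nat) : Prop := forall p, prime p -> ~~ (p ^ 2 %| n).

Lemma squarefree_dvd m n : m %| n -> squarefree n -> squarefree m.
Proof.
by move=> dv_mn sqf_n p p_pr; apply: contra (sqf_n p p_pr) => /dvdn_trans->.
Qed.

Lemma prod_primes_gt0 (s : seq nat) : all prime s -> 0 < \prod_(q <- s) q.
Proof.
by move=> s_pr; rewrite big_seq prodn_cond_gt0 // => q /(allP s_pr)/prime_gt0.
Qed.

Lemma logn_prod_primes p (s : seq nat) :
  all prime s -> uniq s -> logn p (\prod_(q <- s) q) = (p \in s).
Proof.
elim: s => [_ _ | q s IHs /= /andP[q_pr s_pr] /andP[qNs s_uniq]].
  by rewrite big_nil logn1.
rewrite big_cons lognM ?prod_primes_gt0 ?prime_gt0 //.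
rewrite (logn_prime _ q_pr) IHs // in_cons.
by case: eqP => [-> | _]; rewrite ?(negPf qNs).
Qed.

Definition rad (n : nat) : nat := \prod_(p <- primes n) p.

Lemma rad_gt0 n : 0 < rad n.
Proof. exact/prod_primes_gt0/all_prime_primes. Qed.

Lemma logn_rad p n : logn p (rad n) = (p \in primes n).
Proof. by rewrite logn_prod_primes ?all_prime_primes ?primes_uniq. Qed.

Lemma pi_rad n : \pi(rad n) =i \pi(n).
Proof. by move=> p; rewrite !inE -logn_gt0 logn_rad lt0b. Qed.

Lemma squarefree_rad n : squarefree (rad n).
Proof.
move=> p p_pr; rewrite pfactor_dvdn ?rad_gt0 // logn_rad -ltnNge ltnS.
by case: (_ \in _).
Qed.

Section PowerMorphism.

Variables (gT : finGroupType) (H : {group gT}) (cHH : abelian H) (r : nat).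

Lemma expgm_morphM : {in H &, {morph (fun x : gT => x ^+ r) : x y / x * y}}.
Proof. by move=> x y Hx Hy /=; rewrite expgMn //; apply: (centsP cHH). Qed.

Canonical expgm := Morphism expgm_morphM.

Lemma morphim_expgm (A : {set gT}) :
  A \subset H -> expgm @* A = [set x ^+ r | x in A].
Proof. exact: morphimEsub. Qed.

End PowerMorphism.

Lemma Phi_abelian_squarefree_exponent (gT : finGroupType) (Q : {group gT}) :
  abelian Q -> squarefree (exponent Q) -> 'Phi(Q) = 1.
Proof.
move=> cQQ sqfQ; apply/trivgP/subsetP => y Phi_y; rewrite inE -order_eq1.
apply: contraT => y_ne1.
have y_gt1 : 1 < #[y] by rewrite ltn_neqAle eq_sym y_ne1 order_gt0.
have Qy : y \in Q := subsetP (Phi_sub Q) y Phi_y.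
pose p := pdiv #[y]; have p_pr : prime p := pdiv_prime y_gt1.
have p_y : p %| #[y] := pdiv_dvd _.
have p_e : p %| exponent Q := dvdn_trans p_y (dvdn_exponent Qy).
pose s := exponent Q %/ p; have def_e : exponent Q = (s * p)%N by rewrite divnK.
(* The [s]-th power map sends [Q] onto an elementary abelian [p]-group, so
   Frattini continuity forces [y ^+ s = 1], whence [p ^ 2] divides [s * p]. *)
have abelQs : p.-abelem (expgm cQQ s @* Q).
  rewrite abelemE // morphim_abelian //=; apply/exponentP => _ /morphimP[x _ Qx ->].
  by rewrite /= -expgM -def_e expg_exponent.
have ys1 : y ^+ s = 1.
  have /eqP PhiQs1 : 'Phi(expgm cQQ s @* Q) == 1.
    by rewrite (trivg_Phi (abelem_pgroup abelQs)).
  have := Frattini_continuous (expgm cQQ s); rewrite PhiQs1.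
  by move/subsetP/(_ (expgm cQQ s y)); rewrite mem_morphim // => /(_ isT)/set1gP.
have := sqfQ p p_pr; rewrite def_e expnS expn1 dvdn_pmul2r ?prime_gt0 //.
by rewrite (dvdn_trans p_y) // order_dvdn ys1.
Qed.

Lemma prime_index_maximal_abelian (gT : finGroupType) (H M : {group gT}) :
  abelian H -> maximal M H -> prime #|H : M|.
Proof.
move=> cHH maxM; apply: index_maxnormal_sol_prime (abelian_sol cHH) _.
have nMH : H \subset 'N(M) := sub_abelian_norm cHH (proper_sub (maxgroupp maxM)).
apply/maxgroupP; split=> [|L /andP[ltLH _]]; first by rewrite (maxgroupp maxM) nMH.
exact: (maxgroupP maxM).2 L ltLH.
Qed.

Lemma expg_indexg_mem (gT : finGroupType) (H M : {group gT}) x :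
  H \subset 'N(M) -> x \in H -> x ^+ #|H : M| \in M.
Proof.
move=> nMH Hx; have Nx := subsetP nMH x Hx.
apply: coset_idr; first by rewrite groupX.
by rewrite morphX //= -card_quotient // expg_cardG // mem_quotient.
Qed.

Lemma Phi_abelian_expg (gT : finGroupType) (H : {group gT}) r :
  abelian H -> squarefree r -> \pi(r).-group H -> 'Phi(H) = [set x ^+ r | x in H].
Proof.
move=> cHH sqf_r piH; rewrite -(morphim_expgm cHH r (subxx H)).
pose K := (expgm cHH r @* H)%G.
have sKH : K \subset H.
  by apply/subsetP => _ /morphimP[x _ Hx ->]; apply: groupX.
have nKH : H \subset 'N(K) := sub_abelian_norm cHH sKH.
apply/eqP; rewrite eqEsubset; apply/andP; split.
  rewrite -quotient_sub1 ?gFsub_trans //.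
  apply: subset_trans (morphimF _ _ nKH) _.
  rewrite /= Phi_abelian_squarefree_exponent ?quotient_abelian //.
  apply: squarefree_dvd sqf_r; apply/exponentP => _ /morphimP[x Nx Hx ->].
  by rewrite -morphX //= (coset_id (mem_morphim (expgm cHH r) Hx Hx)).
apply/bigcapsP => M /predU1P[-> | maxM]; first exact: sKH.
have nMH : H \subset 'N(M) := sub_abelian_norm cHH (proper_sub (maxgroupp maxM)).
have p_pr := prime_index_maximal_abelian cHH maxM.
have /dvdnP[k ->] : #|H : M| %| r.
  have := pgroupP piH _ p_pr (dvdn_indexg H M).
  by rewrite mem_primes => /and3P[].
apply/subsetP => _ /morphimP[x _ Hx ->].
by rewrite /= expgM expgAC groupX // expg_indexg_mem.
Qed.

Definition has_abelian_root (r : nat) (gT : finGroupType) (G : {set gT}) : Prop :=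
  exists (hT : finGroupType) (H : {group hT}),
    [/\ abelian H, \pi(r).-group H & G \isog [set y ^+ r | y in H]].

Lemma cycle_has_abelian_root r (gT : finGroupType) (x : gT) :
  0 < r -> \pi(r).-elt x -> has_abelian_root r <[x]>.
Proof.
move=> r_gt0 pi_x; have : 0 < #[x] * r by rewrite muln_gt0 order_gt0.
case def_n: (#[x] * r)%N => [//|m] _.
pose c : 'I_m.+1 := Zp1; have oc : #[c] = (#[x] * r)%N by rewrite order_Zp1.
exists _, <[c]>%G; split; first exact: cycle_abelian.
  by rewrite /pgroup -orderE oc pnatM pnat_pi // andbT.
rewrite -(morphim_expgm (cycle_abelian c)) // morphim_cycle ?cycle_id //=.
rewrite isog_cyclic_card ?cycle_cyclic //= -!orderE orderXdiv oc ?dvdn_mull //.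
by rewrite mulnK.
Qed.

Lemma expg_pair (aT bT : finGroupType) (u : aT * bT) n :
  u ^+ n = (u.1 ^+ n, u.2 ^+ n).
Proof. by case: u => a b; elim: n => [|n IHn]; rewrite ?expgS ?IHn. Qed.

Lemma setX_abelian (aT bT : finGroupType) (A : {set aT}) (B : {set bT}) :
  abelian A -> abelian B -> abelian (setX A B).
Proof.
move=> cAA cBB; apply/centsP => -[a b] /setXP[Aa Bb] [c d] /setXP[Ac Bd].
by rewrite /commute /=; congr (_, _); [apply: (centsP cAA) | apply: (centsP cBB)].
Qed.

Lemma imset_expg_setX (aT bT : finGroupType) (A : {set aT}) (B : {set bT}) n :
  [set u ^+ n | u in setX A B] = setX [set a ^+ n | a in A] [set b ^+ n | b in B].
Proof.
apply/setP => -[a b]; rewrite inE /=; apply/imsetP/andP => [[[c d]]|].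
  by move=> /setXP[Ac Bd]; rewrite expg_pair => -[-> ->]; split; apply: imset_f.
case=> /imsetP[c Ac ->] /imsetP[d Bd ->].
by exists (c, d); rewrite ?inE ?Ac ?Bd // expg_pair.
Qed.

Lemma dprod_has_abelian_root r (gT : finGroupType) (A B G : {group gT}) :
  A \x B = G -> has_abelian_root r A -> has_abelian_root r B ->
  has_abelian_root r G.
Proof.
move=> defG [hA [HA [cHA piHA isoA]]] [hB [HB [cHB piHB isoB]]].
exists _, (setX HA HB)%G; split; first exact: setX_abelian.
  by rewrite /pgroup cardsX pnatM; apply/andP.
rewrite -(morphim_expgm cHA) // in isoA; rewrite -(morphim_expgm cHB) // in isoB.
rewrite imset_expg_setX -(morphim_expgm cHA) // -(morphim_expgm cHB) //.
apply: isog_dprod defG (setX_dprod _ _) _ _.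
  exact: isog_trans isoA (isog_setX1 _ _).
exact: isog_trans isoB (isog_set1X _ _).
Qed.

Lemma abelian_has_abelian_root r (gT : finGroupType) (G : {group gT}) :
  0 < r -> abelian G -> \pi(r).-group G -> has_abelian_root r G.
Proof.
move=> r_gt0 cGG; have [b defG _] := abelian_structure cGG.
elim: b G defG {cGG} => [|x b IHb] G.
  rewrite big_nil => <- _; rewrite -cycle1.
  by apply: cycle_has_abelian_root; rewrite ?p_elt1.
rewrite big_cons => defG piG; have [[_ K _ defK] _ _ _] := dprodP defG.
rewrite defK in defG; have /mulG_sub[sxG sKG] := dprodW defG.
apply: dprod_has_abelian_root defG _ _.
  exact: cycle_has_abelian_root r_gt0 (pgroupS sxG piG).
exact: IHb K defK (pgroupS sKG piG).
Qed.

Lemma completely_Phi_realisable_morphim (gT hT : finGroupType) (G : {group gT})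
    (H : {group hT}) (f : {morphism H >-> hT}) :
  (forall H1 : {group hT}, H1 \subset H -> 'Phi(H1) = f @* H1) ->
  G \isog f @* H -> completely_Phi_realisable G.
Proof.
move=> PhiE /isogP[g injg gG]; exists hT, H; split.
- by rewrite PhiE // -gG sub_isog.
- move=> G1 sG1G; exists (f @*^-1 (g @* G1))%G; first exact: subsetIl.
  by rewrite PhiE ?subsetIl // morphpreK ?sub_isog // -gG morphimS.
move=> H1 sH1H; have sPhiG : 'Phi(H1) \subset g @* G by rewrite gG PhiE ?morphimS.
exists (g @*^-1 'Phi(H1))%G; first exact: subsetIl.
by rewrite -{1}(morphpreK sPhiG) isog_sym sub_isog ?subsetIl.
Qed.

Theorem theorem3p3 (gT : finGroupType) (G : {group gT}) :
  abelian G -> completely_Phi_realisable G.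
Proof.
move=> cGG; pose r := rad #|G|.
have piG : \pi(r).-group G by rewrite /pgroup (eq_pnat _ (pi_rad _)) pnat_pi.
have [hT [H [cHH piH isoG]]] := abelian_has_abelian_root (rad_gt0 _) cGG piG.
apply: (completely_Phi_realisable_morphim (f := expgm cHH r)) => [H1 sH1H|].
  rewrite morphim_expgm //.
  exact: Phi_abelian_expg (abelianS sH1H cHH) (squarefree_rad _) (pgroupS sH1H piH).
by rewrite morphim_expgm.
Qed.
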